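(* Let $\mathcal{X}'\subseteq\mathcal{X}$ be a set of pairwise backward kinematically inseparable observations. Then there exists $u\in\Delta(\mathcal{X})$ with $\mathrm{supp}(u)=\mathcal{X}$ such that for all $x',x''\in\mathcal{X}'$, $$\forall x\in\mathcal{X},a\in\mathcal{A}:\quad\frac{T(x'\mid x,a)}{u(x')}=\frac{T(x''\mid x,a)}{u(x'')}.$$ Conversely, if this identity holds for some $u\in\Delta(\mathcal{X})$ with full support and all $x',x''\in\mathcal{X}'\subseteq\mathcal{X}$, then $\mathcal{X}'$ is a backward kinematically inseparable set.
   Context: Block MDP: horizon $H$; finite latent states $\mathcal{S}=\sqcup_h\mathcal{S}_h$; countable observations $\mathcal{X}=\sqcup_h\mathcal{X}_h$; finite actions $\mathcal{A}$; transitions $T(\cdot\mid s,a)\in\Delta(\mathcal{S}_{h+1})$ for $s\in\mathcal{S}_h$; emissions $q(\cdot\mid s)\in\Delta(\mathcal{X}_h)$ with pairwise disjoint supports, giving a decoder $g^\star$. Observation transitions: $T(x'\mid x,a)=q(x'\mid g^\star(x'))T(g^\star(x')\mid g^\star(x),a)$. For $u\in\Delta(\mathcal{X}\times\mathcal{A})$ with full support, $\mathbb{P}_u(x,a\mid x')=\frac{T(x'\mid x,a)u(x,a)}{\sum_{\tilde x,\tilde a}T(x'\mid\tilde x,\tilde a)u(\tilde x,\tilde a)}$; $x_1',x_2'$ are backward kinematically inseparable if $\mathbb{P}_u(\cdot\mid x_1')=\mathbb{P}_u(\cdot\mid x_2')$ for every full-support $u$ (an equivalence relation); a backward KI set is a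 set of pairwise backward KI observations. *)

From HB Require Import structures.
From mathcomp Require Import all_boot all_order all_algebra.
From mathcomp Require Import all_classical all_reals all_analysis.
Set Implicit Arguments. Unset Strict Implicit. Unset Printing Implicit Defensive.
Import Order.TTheory GRing.Theory Num.Theory.
Local Open Scope classical_set_scope.
Local Open Scope ring_scope.

Section BlockMDP.
Variables (R : realType) (S : finType) (X : countType) (A : finType).

Definition is_distr (Y : countType) (u : Y -> R) : Prop :=
  (forall y, 0 <= u y) /\ (\esum_(y in [set: Y]) (u y)%:E = 1%E).

Definition full_support (Y : Type) (u : Y -> R) : Prop := forall y, 0 < u y.

(* Block MDP with horizon H; layers are numbered 1..H.
   T s a s' = T(s' | s, a), q s x = q(x | s), g = decoder g*. *)
Definition block_mdp (H : nat) (layerS : S -> nat) (layerX : X -> nat)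
    (T : S -> A -> S -> R) (q : S -> X -> R) (g : X -> S) : Prop :=
  (forall s, (1 <= layerS s <= H)%N) /\
      (forall x, (1 <= layerX x <= H)%N) /\
      (forall s a s', 0 <= T s a s') /\
      (forall s a, (layerS s < H)%N ->
          (forall s', 0 < T s a s' -> layerS s' = (layerS s).+1) /\
          \sum_(s' : S) T s a s' = 1) /\
      (forall s a s', layerS s = H -> T s a s' = 0) /\
      (forall s, is_distr (q s) /\
                 (forall x, 0 < q s x -> layerX x = layerS s)) /\
      (* pairwise disjoint supports, decoded by g *)
      (forall s x, 0 < q s x -> g x = s).

Definition obsT (T : S -> A -> S -> R) (q : S -> X -> R) (g : X -> S)
    (x : X) (a : A) (x' : X) : R :=
  q (g x') x' * T (g x) a (g x').

(* P_u(x, a | x') for u in Delta(X x A); the normalizer is finite (<= 1);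
   if it is 0 the value is 0 (MathComp convention r / 0 = 0). *)
Definition Pu (T : S -> A -> S -> R) (q : S -> X -> R) (g : X -> S)
    (u : X * A -> R) (x' : X) (x : X) (a : A) : R :=
  obsT T q g x a x' * u (x, a) /
  fine (\esum_(p in [set: X * A]) (obsT T q g p.1 p.2 x' * u p)%:E).

Definition backward_KI (T : S -> A -> S -> R) (q : S -> X -> R) (g : X -> S)
    (x1 x2 : X) : Prop :=
  forall u : X * A -> R, is_distr u -> full_support u ->
    forall x a, Pu T q g u x1 x a = Pu T q g u x2 x a.

Definition backward_KI_set (T : S -> A -> S -> R) (q : S -> X -> R)
    (g : X -> S) (X' : set X) : Prop :=
  forall x1 x2, X' x1 -> X' x2 -> backward_KI T q g x1 x2.

Definition ratio_identity (T : S -> A -> S -> R) (q : S -> X -> R)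
    (g : X -> S) (u : X -> R) (X' : set X) : Prop :=
  forall x' x'', X' x' -> X' x'' -> forall (x : X) (a : A),
    obsT T q g x a x' / u x' = obsT T q g x a x'' / u x''.

End BlockMDP.

(* The posterior P_u(. | x') is the likelihood T(x' | .) times the prior u,
   normalised.  Hence equality of the posteriors of x' and x'' for a single
   full-support prior already forces T(x' | .) and T(x'' | .) to be positive
   multiples of each other (as soon as one of them is not identically zero),
   and conversely proportional likelihoods have the same posterior for every
   prior.  If some x0 in X' is reached from (x0', a0), all of X' is then
   proportional to x0, and the ratio identity holds for the weights
   u(x') = T(x' | x0', a0) on X', completed by arbitrary positive summable
   weights off X' and normalised.  If no element of X' is reachable, both
   sides of the ratio identity vanish for every u. *)
From HB Require Import structures.
From mathcomp Require Import all_boot all_order all_algebra.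
From mathcomp Require Import all_classical all_reals all_analysis.
From mathcomp Require Import ring.
Set Implicit Arguments. Unset Strict Implicit. Unset Printing Implicit Defensive.
Import Order.TTheory GRing.Theory Num.Theory.
Local Open Scope classical_set_scope.
Local Open Scope ring_scope.

Section Normalization.
Variable R : realType.

Lemma esumZl (I : choiceType) (D : set I) (a : I -> \bar R) (r : R) :
  0 < r -> (forall i, (0 <= a i)%E) ->
  \esum_(i in D) (r%:E * a i)%E = (r%:E * \esum_(i in D) a i)%E.
Proof.
move=> r0 a0; rewrite /esum -ereal_sup_pZl // image_comp; congr ereal_sup.
by apply: eq_imagel => B _ /=; rewrite ge0_mule_fsumr.
Qed.

Lemma lee_esum_point (I : choiceType) (D : set I) (a : I -> \bar R) (i : I) :
  D i -> (a i <= \esum_(j in D) a j)%E.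
Proof.
move=> Di; apply: esum_ge; exists [set i]; last by rewrite fsbig_set1.
by split; [exact: finite_set1 | move=> _ ->].
Qed.

Lemma fine_pmul (r : R) (E : \bar R) : 0 < r -> fine (r%:E * E) = r * fine E.
Proof.
move=> r0; case: E => [x||] //=.
- by rewrite gt0_muley ?lte_fin // mulr0.
- by rewrite gt0_muleNy ?lte_fin // mulr0.
Qed.

Definition proportional (I : Type) (f1 f2 : I -> R) : Prop :=
  exists2 c : R, 0 < c & forall i, f1 i = c * f2 i.

Variable T : choiceType.
Implicit Types f : T -> R.

Definition total_mass f : R := fine (\esum_(i in [set: T]) (f i)%:E).

Definition normalized f (i : T) : R := f i / total_mass f.

Lemma total_mass_ge0 f : (forall i, 0 <= f i) -> 0 <= total_mass f.
Proof. by move=> f0; rewrite fine_ge0 // esum_ge0 // => i _; rewrite lee_fin. Qed.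

Lemma total_mass_gt0 f i0 :
  (forall i, 0 <= f i) -> (\esum_(i in [set: T]) (f i)%:E < +oo)%E ->
  0 < f i0 -> 0 < total_mass f.
Proof.
move=> f0 fin fi0; have E0 : (0 <= \esum_(i in [set: T]) (f i)%:E)%E.
  by rewrite esum_ge0 // => i _; rewrite lee_fin.
rewrite -lte_fin fineK ?ge0_fin_numE //.
by rewrite (lt_le_trans _ (@lee_esum_point _ setT _ i0 I)) ?lte_fin.
Qed.

Lemma total_massZ (c : R) f : 0 < c -> (forall i, 0 <= f i) ->
  total_mass (fun i => c * f i) = c * total_mass f.
Proof.
by move=> c0 f0; rewrite /total_mass -fine_pmul // -esumZl.
Qed.

Lemma normalizedZ (c : R) f i : 0 < c -> (forall i, 0 <= f i) ->
  normalized (fun i => c * f i) i = normalized f i.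
Proof.
move=> c0 f0; rewrite /normalized total_massZ //.
have [->|Zn] := eqVneq (total_mass f) 0; first by rewrite mulr0 !invr0 !mulr0.
by field; rewrite Zn gt_eqF.
Qed.

Lemma normalized_proportional (k1 k2 u : T -> R) i0 :
  (forall i, 0 < u i) -> (forall i, 0 <= k1 i) -> (forall i, 0 <= k2 i) ->
  (\esum_(i in [set: T]) (k2 i * u i)%:E < +oo)%E -> 0 < k2 i0 ->
  (forall i, normalized (fun i => k1 i * u i) i
             = normalized (fun i => k2 i * u i) i) ->
  proportional k1 k2.
Proof.
move=> u0 k10 k20 fin2 k2i0; rewrite /normalized => eq12.
set Z1 := total_mass (fun i => k1 i * u i) in eq12.
set Z2 := total_mass (fun i => k2 i * u i) in eq12.
have ku0 i : 0 <= k2 i * u i by exact: mulr_ge0 (k20 i) (ltW (u0 i)).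
have ku_gt0 : 0 < k2 i0 * u i0 by rewrite mulr_gt0.
have Z2_gt0 : 0 < Z2 by exact: total_mass_gt0 ku0 fin2 ku_gt0.
have Z1_gt0 : 0 < Z1.
  rewrite lt_def total_mass_ge0 ?andbT => [|i]; last exact: mulr_ge0 (k10 i) (ltW (u0 i)).
  apply/eqP => Z10; move: (eq12 i0); rewrite Z10 invr0 mulr0 => /esym/eqP.
  by rewrite mulf_eq0 invr_eq0 !gt_eqF.
exists (Z1 / Z2); first by rewrite divr_gt0.
move=> i; have ui : u i != 0 by rewrite gt_eqF.
have -> : k1 i = k1 i * u i / Z1 * Z1 / u i by field; rewrite ui gt_eqF.
by rewrite eq12; field; rewrite ui !gt_eqF.
Qed.

End Normalization.

Section Distributions.
Variables (R : realType) (Y : countType).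

Lemma distr_le1 (u : Y -> R) y : is_distr u -> u y <= 1.
Proof. by move=> [_ u1]; rewrite -lee_fin -u1 lee_esum_point. Qed.

Lemma normalized_distr (y0 : Y) (f : Y -> R) :
  (forall y, 0 < f y) -> (\esum_(y in [set: Y]) (f y)%:E < +oo)%E ->
  is_distr (normalized f) /\ full_support (normalized f).
Proof.
move=> f0 fin.
have Z0 : 0 < total_mass f by apply: (total_mass_gt0 _ fin (f0 y0)) => y; exact: ltW.
have Efin : \esum_(y in [set: Y]) (f y)%:E \is a fin_num.
  by rewrite ge0_fin_numE // esum_ge0 // => y _; rewrite lee_fin ltW.
split; last by move=> y; rewrite divr_gt0.
split=> [y|]; first by rewrite divr_ge0 ?ltW.
rewrite (eq_esum (b := fun y => ((total_mass f)^-1%:E * (f y)%:E)%E)); last first.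
  by move=> y _; rewrite -EFinM mulrC.
rewrite esumZl ?invr_gt0 // => [|y]; last by rewrite lee_fin ltW.
by rewrite -[X in (_ * X)%E]fineK // -EFinM mulVf // gt_eqF.
Qed.

Lemma esum_pickle_geometric :
  (\esum_(y in [set: Y]) ((2 ^ (pickle y).+1)%:R^-1 : R)%:E <= 1)%E.
Proof.
set a := fun k : nat => (((2 ^ k.+1)%:R)^-1 : R)%:E.
have a0 n : (0 <= a n)%E by rewrite lee_fin.
have -> : \esum_(y in [set: Y]) a (pickle y) = \esum_(n in pickle @` [set: Y]) a n.
  by rewrite esum_image // => x y _ _; exact: pickle_inj.
have <- : (\sum_(n <oo) a n = 1)%E.
  have := @cvg_geometric_eseries_half R 1 0; rewrite expr0 divr1 => /cvg_lim <- //.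
  by apply: eq_eseriesr => n _; rewrite addn1 div1r.
rewrite nneseries_esumT // esum_mkcond; apply: le_esum => n _.
by case: ifP.
Qed.

Lemma exists_full_support_distr (y0 : Y) :
  exists u : Y -> R, is_distr u /\ full_support u.
Proof.
have w0 (y : Y) : 0 < ((2 ^ (pickle y).+1)%:R^-1 : R) by rewrite invr_gt0 ltr0n expn_gt0.
exists (normalized (fun y => (2 ^ (pickle y).+1)%:R^-1)).
apply: (normalized_distr y0 w0); exact: le_lt_trans esum_pickle_geometric (ltry _).
Qed.

Lemma exists_distr_ratio (I : Type) (K : Y -> I -> R) (P : set Y) (i0 : I) (y0 : Y) :
  (forall y i, 0 <= K y i) -> (\esum_(y in [set: Y]) (K y i0)%:E < +oo)%E ->
  (forall y, P y -> 0 < K y i0) ->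
  (forall y y', P y -> P y' -> proportional (K y) (K y')) ->
  exists u : Y -> R, [/\ is_distr u, full_support u &
    forall y y', P y -> P y' -> forall i, K y i / u y = K y' i / u y'].
Proof.
move=> K0 Kfin KP Kprop; have [h [[h_ge0 h1] h_pos]] := exists_full_support_distr y0.
pose w y := if `[< P y >] then K y i0 else h y.
have w_gt0 y : 0 < w y by rewrite /w; case: asboolP => [/KP|].
have w_le y : w y <= K y i0 + h y.
  by rewrite /w; case: asboolP => _; rewrite ?lerDl ?lerDr // ltW.
have wfin : (\esum_(y in [set: Y]) (w y)%:E < +oo)%E.
  apply: (le_lt_trans (le_esum (b := fun y => ((K y i0)%:E + (h y)%:E)%E) _)).
    by move=> y _; rewrite -EFinD lee_fin.
  rewrite esumD => [|y _|y _]; rewrite ?lee_fin //.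
  by rewrite h1 lte_add_pinfty // ltry.
have [wd wfs] := normalized_distr y0 w_gt0 wfin.
have Z0 : 0 < total_mass w := total_mass_gt0 (fun y => ltW (w_gt0 y)) wfin (w_gt0 y0).
exists (normalized w); split => // y y' Py Py' i.
have [c c0 Kyy'] := Kprop y y' Py Py'; have Ky'0 := KP y' Py'.
rewrite /normalized; set Z := total_mass w.
rewrite /w; do 2![case: asboolP => // _].
by rewrite !Kyy'; field; rewrite !gt_eqF.
Qed.

End Distributions.

Lemma block_mdp_kernels (R : realType) (S : finType) (X : countType) (A : finType)
    (H : nat) (layerS : S -> nat) (layerX : X -> nat)
    (T : S -> A -> S -> R) (q : S -> X -> R) (g : X -> S) :
  block_mdp H layerS layerX T q g ->
  [/\ forall s, is_distr (q s), forall s a s', 0 <= T s a s'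
    & forall s a s', T s a s' <= 1].
Proof.
move=> [layerS_bound [_ [T_ge0 [T_distr [T_last [q_distr _]]]]]].
split=> [s|//|s a s']; first by have [] := q_distr s.
have /andP[_] := layerS_bound s; rewrite leq_eqVlt => /orP[/eqP sH|sH].
  by rewrite T_last.
have [_ <-] := T_distr s a sH.
by rewrite (bigD1 s') //= lerDl sumr_ge0.
Qed.

Section ObservationKernel.
Variables (R : realType) (S : finType) (X : countType) (A : finType).
Variables (T : S -> A -> S -> R) (q : S -> X -> R) (g : X -> S).
Hypothesis q_distr : forall s, is_distr (q s).
Hypothesis T_ge0 : forall s a s', 0 <= T s a s'.
Hypothesis T_le1 : forall s a s', T s a s' <= 1.

Local Notation obs := (obsT T q g).

Let q_ge0 s x : 0 <= q s x. Proof. by have [] := q_distr s. Qed.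

Lemma obsT_ge0 x a x' : 0 <= obs x a x'.
Proof. exact: mulr_ge0. Qed.

Lemma obsT_le_emission x a x' : obs x a x' <= q (g x') x'.
Proof. by rewrite /obsT ler_piMr. Qed.

Lemma obsT_le1 x a x' : obs x a x' <= 1.
Proof. exact: le_trans (obsT_le_emission x a x') (distr_le1 _ (q_distr _)). Qed.

Lemma esum_obsT_lt_pinfty x a :
  (\esum_(x' in [set: X]) (obs x a x')%:E < +oo)%E.
Proof.
apply: (@le_lt_trans _ _ (\esum_(x' in [set: X]) \sum_(s : S) (q s x')%:E)%E).
  apply: le_esum => x' _; rewrite sumEFin lee_fin.
  apply: le_trans (obsT_le_emission x a x') _.
  by rewrite (bigD1 (g x')) //= lerDl sumr_ge0.
rewrite esum_sum => [|x' s _ _]; last by rewrite lee_fin.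
under eq_bigr => s _ do rewrite (proj2 (q_distr s)).
by rewrite sumEFin ltry.
Qed.

Lemma esum_obsT_prior_lt_pinfty (u : X * A -> R) x' : is_distr u ->
  (\esum_(p in [set: X * A]) (obs p.1 p.2 x' * u p)%:E < +oo)%E.
Proof.
move=> [u_ge0 u1]; apply: (le_lt_trans _ (ltry 1)); rewrite -u1.
by apply: le_esum => p _; rewrite lee_fin ler_piMl // obsT_le1.
Qed.

Lemma backward_KI_proportional x1 x2 (p0 : X * A) :
  backward_KI T q g x1 x2 -> 0 < obs p0.1 p0.2 x2 ->
  proportional (fun p => obs p.1 p.2 x1) (fun p => obs p.1 p.2 x2).
Proof.
move=> KI reach; have [u [u_distr u_pos]] := exists_full_support_distr R p0.
apply: (normalized_proportional u_pos _ _ (esum_obsT_prior_lt_pinfty x2 u_distr) reach).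
- by move=> p; exact: obsT_ge0.
- by move=> p; exact: obsT_ge0.
- by move=> [x a]; exact: KI.
Qed.

Lemma proportional_backward_KI x1 x2 :
  proportional (fun p => obs p.1 p.2 x1) (fun p => obs p.1 p.2 x2) ->
  backward_KI T q g x1 x2.
Proof.
move=> [c c_gt0 obs12] u [u_ge0 _] _ x a.
change (normalized (fun p => obs p.1 p.2 x1 * u p) (x, a)
        = normalized (fun p => obs p.1 p.2 x2 * u p) (x, a)).
have -> : (fun p => obs p.1 p.2 x1 * u p) = (fun p => c * (obs p.1 p.2 x2 * u p)).
  by apply: funext => p; rewrite obs12 mulrA.
by apply: normalizedZ => // p; rewrite mulr_ge0 ?obsT_ge0.
Qed.

Lemma ratio_identity_proportional (u : X -> R) (X' : set X) x1 x2 :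
  full_support u -> ratio_identity T q g u X' -> X' x1 -> X' x2 ->
  proportional (fun p => obs p.1 p.2 x1) (fun p => obs p.1 p.2 x2).
Proof.
move=> u_pos ratio X1 X2; exists (u x1 / u x2); first by rewrite divr_gt0.
move=> [x a] /=; rewrite -(divfK (lt0r_neq0 (u_pos x1)) (obs x a x1)).
by rewrite (ratio x1 x2 X1 X2 x a); field; rewrite gt_eqF.
Qed.

Lemma ratio_identity_backward_KI_set (u : X -> R) (X' : set X) :
  full_support u -> ratio_identity T q g u X' -> backward_KI_set T q g X'.
Proof.
move=> u_pos ratio x1 x2 X1 X2; apply: proportional_backward_KI.
exact: ratio_identity_proportional u_pos ratio X1 X2.
Qed.

Lemma backward_KI_set_ratio_identity (X' : set X) (x_ : X) :
  backward_KI_set T q g X' ->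
  exists u : X -> R, [/\ is_distr u, full_support u & ratio_identity T q g u X'].
Proof.
move=> KI.
have [[x0 [p0 [X0 reach]]] | unreachable] :=
  pselect (exists x0 (p0 : X * A), X' x0 /\ 0 < obs p0.1 p0.2 x0); last first.
  have [u [u_distr u_pos]] := exists_full_support_distr R x_.
  exists u; split => // x1 x2 X1 X2 x a.
  have obs0 y : X' y -> obs x a y = 0.
    move=> Xy; apply/eqP; rewrite eq_le obsT_ge0 andbT leNgt; apply/negP => pos.
    by apply: unreachable; exists y, (x, a).
  by rewrite !obs0 // !mul0r.
have reach_all y : X' y -> 0 < obs p0.1 p0.2 y.
  move=> Xy; have [c c_gt0 ->] := backward_KI_proportional (KI y x0 Xy X0) reach.
  exact: mulr_gt0.
have proportional_all y y' : X' y -> X' y' ->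
    proportional (fun p => obs p.1 p.2 y) (fun p => obs p.1 p.2 y').
  by move=> Xy Xy'; exact: backward_KI_proportional (KI y y' Xy Xy') (reach_all y' Xy').
have [u [u_distr u_pos ratio]] := exists_distr_ratio x_
  (fun y p => obsT_ge0 p.1 p.2 y) (esum_obsT_lt_pinfty p0.1 p0.2)
  reach_all proportional_all.
by exists u; split => // y y' Xy Xy' x a; exact: ratio y y' Xy Xy' (x, a).
Qed.

End ObservationKernel.

Theorem mainTheorem5 (R : realType) (S : finType) (X : countType) (A : finType)
    (H : nat) (layerS : S -> nat) (layerX : X -> nat)
    (T : S -> A -> S -> R) (q : S -> X -> R) (g : X -> S)
    (hB : block_mdp H layerS layerX T q g) (hX : inhabited X)
    (X' : set X) :
  (backward_KI_set T q g X' ->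
     exists u : X -> R, [/\ is_distr u, full_support u & ratio_identity T q g u X'])
  /\
  (forall u : X -> R, is_distr u -> full_support u -> ratio_identity T q g u X' ->
     backward_KI_set T q g X').
Proof.
have [q_distr T_ge0 T_le1] := block_mdp_kernels hB.
case: hX => x_; split.
- exact: backward_KI_set_ratio_identity.
- by move=> u _; exact: ratio_identity_backward_KI_set.
Qed.
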